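(* Let $X$ be a finite quasi-metric space, i.e.\ a finite set $X$ with a function $d:X\times X\to[0,\infty)$ such that $d(x,x)=0$, $d(x,z)\le d(x,y)+d(y,z)$ for all $x,y,z$, and $d(x,y)>0$ whenever $x\neq y$ ($d$ need not be symmetric). Then the $X\times X$ matrix $Z_X$ with entries $Z_X(x,y)=q^{d(x,y)}$ is invertible over the field $\mathbb{Q}(q^{\mathbb{R}})$ of generalized rational functions; that is, $X$ has Möbius inversion over $\mathbb{Q}(q^{\mathbb{R}})$.
   Context: The ring $\mathbb{Z}[q^{[0,\infty)}]$ of generalized polynomials consists of finite formal sums $\sum_i a_i q^{\ell_i}$ with $a_i\in\mathbb{Z}$, $\ell_i\in[0,\infty)$, with multiplication determined by $q^{\ell}q^{k}=q^{\ell+k}$; it is an integral domain, and $\mathbb{Q}(q^{\mathbb{R}})$ denotes its field of fractions (quotients of finite sums $\sum a_i q^{\ell_i}$ with $a_i\in\mathbb{Q}$, $\ell_i\in\mathbb{R}$). A finite enriched category $X$ ''has Möbius inversion'' when its zeta matrix $Z_X$ is invertible; for a quasi-metric space the zeta matrix is $Z_X(x,y)=q^{d(x,y)}$. Matrices are indexed by the finite set $X$ for rows and columns. *)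

From HB Require Import structures.
From mathcomp Require Import all_boot all_order all_algebra finmap.
From mathcomp Require Import fraction.
From mathcomp.multinomials Require Import monalg.
From mathcomp Require Import Rstruct.
From Stdlib Require Import Reals ClassicalEpsilon.

Set Implicit Arguments.
Unset Strict Implicit.
Unset Printing Implicit Defensive.

Import Order.TTheory GRing.Theory Num.Theory.
Local Open Scope ring_scope.

Definition nnR := {x : R | 0 <= x}.

HB.instance Definition _ := [Choice of nnR by <:].

Definition nnR0 : nnR := exist _ 0 (lexx 0).
Definition nnR_add (x y : nnR) : nnR :=
  exist _ (val x + val y) (addr_ge0 (valP x) (valP y)).

Lemma nnR_addA : associative nnR_add.
Proof. by move=> x y z; apply: val_inj; rewrite /= addrA. Qed.
Lemma nnR_add0 : left_id nnR0 nnR_add.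
Proof. by move=> x; apply: val_inj; rewrite /= add0r. Qed.
Lemma nnR_addr0 : right_id nnR0 nnR_add.
Proof. by move=> x; apply: val_inj; rewrite /= addr0. Qed.
Lemma nnR_unit (x y : nnR) : nnR_add x y = nnR0 -> x = nnR0 /\ y = nnR0.
Proof.
move=> /(congr1 val) /= /eqP; rewrite paddr_eq0 ?(valP x) ?(valP y) //.
by case/andP=> /eqP hx /eqP hy; split; apply: val_inj.
Qed.
Lemma nnR_addC : commutative nnR_add.
Proof. by move=> x y; apply: val_inj; rewrite /= addrC. Qed.

HB.instance Definition _ :=
  Choice_isMonomialDef.Build nnR nnR_addA nnR_add0 nnR_addr0 nnR_unit.
HB.instance Definition _ := MonomialDef_isConomialDef.Build nnR nnR_addC.

(* The ring Z[q^[0,oo)] of generalized polynomials: finite formal sums *)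
(* sum a_i q^(l_i), a_i in Z, l_i in [0,oo), with q^l q^k = q^(l+k).   *)
Definition GenPoly := {malg int[nnR]}.

HB.instance Definition _ := GRing.ComNzRing.on GenPoly.

(* Units (classically decided), so that GenPoly is a comUnitRing. *)
Definition gp_unit : {pred GenPoly} := fun x =>
  if excluded_middle_informative (exists y : GenPoly, y * x = 1)
  then true else false.

Definition gp_inv (x : GenPoly) : GenPoly :=
  match excluded_middle_informative (exists y : GenPoly, y * x = 1) with
  | left h => proj1_sig (constructive_indefinite_description _ h)
  | right _ => x
  end.

Lemma gp_mulVx : {in gp_unit, left_inverse 1 gp_inv *%R}.
Proof.
move=> x; rewrite unfold_in /gp_unit /gp_inv.
case: excluded_middle_informative => // h _.
by case: constructive_indefinite_description.
Qed.

Lemma gp_unitPl (x y : GenPoly) : y * x = 1 -> gp_unit x.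
Proof.
move=> e; rewrite /gp_unit; case: excluded_middle_informative => // [[]].
by exists y.
Qed.

Lemma gp_invr_out : {in [predC gp_unit], gp_inv =1 (@id GenPoly)}.
Proof.
move=> x; rewrite inE /= unfold_in /gp_unit /gp_inv.
by case: excluded_middle_informative.
Qed.

HB.instance Definition _ :=
  GRing.ComNzRing_hasMulInverse.Build GenPoly gp_mulVx gp_unitPl gp_invr_out.

(* Integrality: leading exponents add. *)
Lemma nnR_seq_max (s : seq nnR) : s != [::] ->
  exists2 k, k \in s & forall k', k' \in s -> val k' <= val k.
Proof.
elim: s => // a [|b s] IH _.
  by exists a; [rewrite mem_seq1 | move=> k'; rewrite mem_seq1 => /eqP ->].
have [k ks kmax] := IH isT.
have [le_ak | lt_ka] := leP (val a) (val k).
  exists k; first by rewrite inE ks orbT.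
  by move=> k'; rewrite inE => /orP[/eqP -> // | /kmax].
exists a; first by rewrite inE eqxx.
move=> k'; rewrite inE => /orP[/eqP -> // | /kmax h].
by apply: (le_trans h); apply: ltW.
Qed.

Lemma nnR_fset_max (A : {fset nnR}) : A != fset0 ->
  exists2 k, k \in A & forall k', k' \in A -> val k' <= val k.
Proof.
case/fset0Pn => k0 hk0.
have [k hk hmax] := @nnR_seq_max (enum_fset A)
  ltac:(by move: (hk0 : k0 \in enum_fset A); case: (enum_fset A)).
by exists k.
Qed.

Lemma gp_integral : GRing.integral_domain_axiom GenPoly.
Proof.
move=> x y xy0; apply/norP => -[nx ny].
have [a ax amax] := @nnR_fset_max (msupp x) ltac:(by rewrite msupp_eq0).
have [b bx bmax] := @nnR_fset_max (msupp y) ltac:(by rewrite msupp_eq0).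
have := congr1 (mcoeff (nnR_add a b)) xy0.
rewrite mcoeff0 mcoeffMl (bigD1_seq a) ?fset_uniq //= (bigD1_seq b) ?fset_uniq //=.
have -> : (mmul a b == nnR_add a b) = true by apply/eqP.
rewrite mulr1n big1 ?addr0; last first.
  move=> k2 nk2; case: eqP; rewrite ?mulr0n // => /(congr1 val) /= /addrI e; case/negP: nk2; apply/eqP; exact: val_inj.
rewrite big_seq_cond big1 ?addr0; last first.
  move=> k1 /andP[k1x nk1]; rewrite big_seq big1 // => k2 k2y.
  case: eqP; rewrite ?mulr0n // => /(congr1 val) /= e.
  have h1 := amax k1 k1x; have h2 := bmax k2 k2y.
  case/negP: nk1; apply/eqP/val_inj/eqP; rewrite eq_le h1 /=.
  rewrite leNgt; apply/negP => lt1.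
  by move: (ltr_leD lt1 h2); rewrite e ltxx.
move/eqP; rewrite mulf_eq0 !mcoeff_eq0 ax bx.
by [].
Qed.

HB.instance Definition _ := GRing.ComUnitRing_isIntegral.Build GenPoly gp_integral.

Definition Qq := {fraction GenPoly}.
HB.instance Definition _ := GRing.Field.on Qq.

(* q^l, for l in [0,oo) (l is truncated to 0 if negative; only used at
   l >= 0). *)
Definition qpow (l : R) : GenPoly := << insubd nnR0 l >>.

(* The zeta matrix Z_X(x,y) = q^(d(x,y)) of a finite (quasi-)metric space,
   indexed by X through its enumeration 'I_#|X| ~ X, with entries in Q(q^R). *)
Definition zeta_mx (X : finType) (d : X -> X -> R) : 'M[Qq]_#|X| :=
  \matrix_(i, j) FracField.tofrac (qpow (d (enum_val i) (enum_val j))).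

(* Setting q = 0, i.e. taking the coefficient of q^0, is a ring morphism
   Z[q^[0,oo)] -> Z because exponents are nonnegative, so q^0 only arises
   as q^0 q^0.  It sends q^(d(x,y)) to 1 on the diagonal and to 0 off it,
   since distinct points are at positive distance.  Hence the determinant
   of the zeta matrix has constant term 1, is nonzero, and becomes a unit in
   the fraction field. *)
From HB Require Import structures.
From mathcomp Require Import all_boot all_order all_algebra finmap.
From mathcomp Require Import fraction.
From mathcomp.multinomials Require Import monalg.
From mathcomp Require Import Rstruct.
From Stdlib Require Import Reals.
Import Order.TTheory GRing.Theory Num.Theory.
Local Open Scope ring_scope.

Lemma det_neq0_of_map_unitmx {R : comNzRingType} {S : comUnitRingType}
    (f : {rmorphism R -> S}) n (A : 'M[R]_n) :
  map_mx f A \in unitmx -> \det A != 0.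
Proof.
by rewrite unitmxE det_map_mx; apply: contraL => /eqP ->; rewrite rmorph0 unitr0.
Qed.

Lemma unitmx_tofrac (R : idomainType) n (A : 'M[R]_n) :
  (map_mx (@FracField.tofrac R) A \in unitmx) = (\det A != 0).
Proof. by rewrite unitmxE det_map_mx unitfE tofrac_eq0. Qed.

Lemma mcoeff1_qpow (l : R) : 0 <= l -> (qpow l)@_mone = (l == 0)%:R.
Proof. by move=> l_ge0; rewrite /qpow mcoeffU1 -val_eqE /= insubdK. Qed.

Definition gp_zeta_mx {X : finType} (d : X -> X -> R) : 'M[GenPoly]_#|X| :=
  \matrix_(i, j) qpow (d (enum_val i) (enum_val j)).

Lemma zeta_mxE (X : finType) (d : X -> X -> R) :
  zeta_mx d = map_mx (@FracField.tofrac GenPoly) (gp_zeta_mx d).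
Proof. by apply/matrixP => i j; rewrite !mxE. Qed.

Lemma mcoeff1_gp_zeta_mx (X : finType) (d : X -> X -> R) :
    (forall x, d x x = 0) -> (forall x y, x != y -> 0 < d x y) ->
  map_mx (mcoeff mone) (gp_zeta_mx d) = 1%:M.
Proof.
move=> d_refl d_sep; apply/matrixP => i j; rewrite !mxE.
have [<- | neq_ij] := eqVneq i j.
  by rewrite d_refl mcoeff1_qpow ?lexx ?(@eqxx R).
have d_gt0 : 0 < d (enum_val i) (enum_val j).
  by apply: d_sep; rewrite (inj_eq enum_val_inj).
by rewrite mcoeff1_qpow ?(ltW d_gt0) ?gt_eqF.
Qed.

Theorem theorem2p10 (X : finType) (d : X -> X -> R)
  (d_ge0 : forall x y, 0 <= d x y)
  (d_refl : forall x, d x x = 0)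
  (d_tri : forall x y z, d x z <= d x y + d y z)
  (d_sep : forall x y, x != y -> 0 < d x y) :
  zeta_mx d \in unitmx.
Proof.
rewrite zeta_mxE unitmx_tofrac.
apply: (det_neq0_of_map_unitmx (mcoeff mone)).
by rewrite mcoeff1_gp_zeta_mx // unitmx1.
Qed.
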